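(* Let $k$ be a field, $n\ge 2$, and let $Q$ be the $n$-Kronecker quiver. Let $\mathcal F=\{(x,y)\in\mathbb N^2 : \tfrac{1}{n-1}x<y\le (n-1)x\}$. For every $(x,y)\in\mathcal F$ there are at least $n$ isomorphism classes of cover-thin $kQ$-modules $N$ with dimension vector $(x,y)$.
   Context: The $n$-Kronecker quiver $Q$ has two vertices, a source $1$ and a sink $2$, and $n$ arrows $\alpha_1,\dots,\alpha_n\colon 1\to 2$; a finite-dimensional $kQ$-module $N$ is a representation with spaces $N_1,N_2$ and maps $N_{\alpha_i}\colon N_1\to N_2$, with dimension vector $(\dim N_1,\dim N_2)$. The universal covering $\widetilde Q$ of $Q$ is the $n$-regular tree (every vertex has exactly $n$ neighbours) with bipartite orientation (every vertex is a sink or a source), together with the covering map to $Q$ sending sources to $1$, sinks to $2$, and labelling each arrow by some $\alpha_i$ such that at every vertex the $n$ incident arrows carry the $n$ distinct labels $\alpha_1,\dots,\alpha_n$. The push-down functor $\pi\colon \operatorname{mod}k\widetilde Q\to\operatorname{mod}kQ$ sends a finite-dimensional representation $M$ of $\widetilde Q$ to the $kQ$-module with $\pi(M)_1=\bigoplus_{v\text{ source}}M_v$, $\pi(M)_2=\bigoplus_{v\text{ sink}}M_v$, and $\pi(M)_{\alpha_i}$ the sum of the maps $M_\beta$ over all arrows $\beta$ of $\widetilde Q$ labelled $\alpha_i$. An indecomposable representation is thin if each of its vector spaces has dimension $0$ or $1$. A $kQ$-module is cover-thin if it is isomorphic to $\pi(M)$ for some thin indecomposable representation $M$ of $\widetilde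 Q$. Here $\mathbb N$ denotes the positive integers. *)

From mathcomp Require Import all_boot all_order all_algebra.
Set Implicit Arguments. Unset Strict Implicit. Unset Printing Implicit Defensive.
Import GRing.Theory.
Local Open Scope ring_scope.

(* A finite-dimensional kQ-module N: spaces N_1 = k^d1, N_2 = k^d2 and, for each
   arrow alpha_i (i : 'I_n), a linear map N_1 -> N_2 given as a matrix
   'M_(d1,d2) acting on row vectors (u |-> u *m mapQ i). *)
Record kQmod (k : fieldType) (n : nat) := KQmod {
  d1 : nat;
  d2 : nat;
  mapQ : 'I_n -> 'M[k]_(d1, d2) }.

Definition kQiso (k : fieldType) (n : nat) (N N' : kQmod k n) : Prop :=
  exists (P : 'M[k]_(d1 N, d1 N')) (P' : 'M[k]_(d1 N', d1 N))
         (R : 'M[k]_(d2 N, d2 N')) (R' : 'M[k]_(d2 N', d2 N)),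
    [/\ P *m P' = 1%:M, P' *m P = 1%:M, R *m R' = 1%:M, R' *m R = 1%:M &
        forall i, mapQ N i *m R = P *m mapQ N' i].

(* Vertices: reduced words w = [:: i_1; ...; i_m] in 'I_n (consecutive letters
   distinct), recording the labels of the path from the root (a source). *)
Definition reduced (n : nat) (w : seq 'I_n) : bool :=
  sorted (fun a b : 'I_n => a != b) w.

Definition tsource (n : nat) (w : seq 'I_n) : bool := ~~ odd (size w).
Definition tsink (n : nat) (w : seq 'I_n) : bool := odd (size w).

Definition tarrow (n : nat) (i : 'I_n) (v w : seq 'I_n) : bool :=
  [&& reduced v, reduced w &
      (tsource v && (w == rcons v i)) || (tsink w && (v == rcons w i))].

(* A thin finite-dimensional representation M of the tree: a finite set S of
   vertices (duplicate-free list of reduced words) with M_v = k for v in S and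
   M_v = 0 otherwise; for an arrow beta : v -> w labelled alpha_i with
   v, w in S the map M_beta : k -> k is multiplication by c i v w (maps with an
   endpoint outside S are zero maps between/into 0-spaces). *)
Definition thin_ok (n : nat) (S : seq (seq 'I_n)) : bool :=
  uniq S && all (@reduced n) S.

Definition thin_endo (k : fieldType) (n : nat) (S : seq (seq 'I_n))
    (c : 'I_n -> seq 'I_n -> seq 'I_n -> k) (f : seq 'I_n -> k) : Prop :=
  forall i v w, v \in S -> w \in S -> tarrow i v w ->
    f w * c i v w = c i v w * f v.

Definition thin_indec (k : fieldType) (n : nat) (S : seq (seq 'I_n))
    (c : 'I_n -> seq 'I_n -> seq 'I_n -> k) : Prop :=
  S != [::] /\
  forall f, thin_endo S c f -> (forall v, v \in S -> f v * f v = f v) ->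
    (forall v, v \in S -> f v = 0) \/ (forall v, v \in S -> f v = 1).

Definition srcs (n : nat) (S : seq (seq 'I_n)) := [seq v <- S | tsource v].
Definition snks (n : nat) (S : seq (seq 'I_n)) := [seq v <- S | tsink v].

(* pi(M)_1 = (+)_{v source} M_v has basis srcs S, pi(M)_2 has basis snks S;
   pi(M)_{alpha_i} is the sum of the maps M_beta over arrows beta labelled
   alpha_i. *)
Definition pushdown (k : fieldType) (n : nat) (S : seq (seq 'I_n))
    (c : 'I_n -> seq 'I_n -> seq 'I_n -> k) : kQmod k n :=
  @KQmod k n (size (srcs S)) (size (snks S))
    (fun i => \matrix_(p < size (srcs S), q < size (snks S))
       (if tarrow i (nth [::] (srcs S) p) (nth [::] (snks S) q)
        then c i (nth [::] (srcs S) p) (nth [::] (snks S) q) else 0)).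

Definition cover_thin (k : fieldType) (n : nat) (N : kQmod k n) : Prop :=
  exists (S : seq (seq 'I_n)) (c : 'I_n -> seq 'I_n -> seq 'I_n -> k),
    [/\ thin_ok S, thin_indec S c & kQiso N (pushdown S c)].

From mathcomp Require Import all_boot all_order all_algebra.
From mathcomp Require Import zify.
Set Implicit Arguments. Unset Strict Implicit. Unset Printing Implicit Defensive.
Import GRing.Theory.
Local Open Scope ring_scope.

(* Let m = min(x, y) and r = max(x, y) - m - 1.  A thin indecomposable representation of
   the n-regular tree is given by a caterpillar: a path whose labels alternate sigma(0) and
   sigma(1) and which has m vertices of one parity, carrying r pendant leaves, leaf t on
   the (t mod m)-th of them with label sigma(2 + t / m).  With all maps equal to 1 its
   push-down has dimension vector (x, y), and each arrow map is a 0/1 matrix with at most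
   one 1 in every row and column, since a tree vertex has one neighbour along each label.
   So the arrow has rank m exactly when each of the m vertices of the minority parity has
   a neighbour along it, which happens for the labels sigma(0), ..., sigma(a-1), where a
   depends only on (x, y) and 1 <= a <= n - 1 because (x, y) lies in F.  Letting sigma run
   through the n cyclic shifts gives n modules whose sets of full-rank arrows are distinct
   cyclic intervals, and ranks are isomorphism invariants. *)

Section RelationMatrix.
Variables (F : fieldType) (T : eqType) (x0 : T).

Lemma mxrank_pivots m n (A : 'M[F]_(m, n)) :
  (forall p : 'I_m, exists q : 'I_n, forall p', A p' q = (p' == p)%:R) ->
  \rank A = m.
Proof.
move=> /fin_all_exists [q Aq]; apply/eqP; apply/row_freeP.
exists (\matrix_(j, p) ((j == q p)%:R : F)); apply/matrixP => p' p.
rewrite !mxE (bigD1 (q p)) //= mxE eqxx mulr1 Aq big1 ?addr0 1?eq_sym //.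
by move=> j /negbTE qj; rewrite mxE qj mulr0.
Qed.

Lemma mxrank_zero_row m n (A : 'M[F]_(m, n)) (p : 'I_m) :
  (forall q, A p q = 0) -> (\rank A < m)%N.
Proof.
move=> Ap0; rewrite ltn_neqAle rank_leq_row andbT; apply/negP => freeA.
have : (delta_mx 0 p : 'rV[F]_m) *m A == 0 by
  rewrite -rowE; apply/eqP/matrixP => i j; rewrite !mxE Ap0.
rewrite (mulmx_free_eq0 _ freeA) => /eqP/matrixP/(_ 0 p).
by rewrite !mxE !eqxx => /eqP; rewrite oner_eq0.
Qed.

Definition relmx (r : rel T) (a b : seq T) : 'M[F]_(size a, size b) :=
  \matrix_(p, q) if r (nth x0 a p) (nth x0 b q) then 1 else 0.

Lemma relmx_rank_rows (r : rel T) (a b : seq T) :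
  (forall u u' v, r u v -> r u' v -> u = u') -> uniq a ->
  (\rank (relmx r a b) == size a) = all (fun u => has (r u) b) a.
Proof.
move=> r_injl uniq_a; have [/allP all_a | /allPn[u u_a /hasPn no_v]] := boolP (all _ a).
  rewrite mxrank_pivots ?eqxx // => p.
  have /hasP[v v_b ruv] := all_a _ (mem_nth x0 (ltn_ord p)).
  have v_lt : (index v b < size b)%N by rewrite index_mem.
  exists (Ordinal v_lt) => p'.
  rewrite mxE /= nth_index //; case: ifP => [r'v | r'v]; last first.
    by have [e|//] := eqVneq p' p; rewrite e ruv in r'v.
  by move/eqP: (r_injl _ _ _ r'v ruv); rewrite nth_uniq // => /eqP/val_inj->; rewrite eqxx.
have u_lt : (index u a < size a)%N by rewrite index_mem.
apply/negbTE; rewrite neq_ltn (@mxrank_zero_row _ _ _ (Ordinal u_lt)) //.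
by move=> q; rewrite mxE /= nth_index // (negbTE (no_v _ (mem_nth _ _))).
Qed.

Lemma tr_relmx (r : rel T) (a b : seq T) :
  (relmx r a b)^T = relmx (fun v u => r u v) b a.
Proof. by apply/matrixP => q p; rewrite !mxE. Qed.

Lemma relmx_rank_cols (r : rel T) (a b : seq T) :
  (forall u v v', r u v -> r u v' -> v = v') -> uniq b ->
  (\rank (relmx r a b) == size b) = all (fun v => has (r^~ v) a) b.
Proof.
move=> r_injr uniq_b; rewrite -mxrank_tr tr_relmx relmx_rank_rows // => v v' u.
exact: r_injr.
Qed.

End RelationMatrix.

Lemma kQiso_rank (k : fieldType) n (N N' : kQmod k n) i :
  kQiso N N' -> \rank (mapQ N i) = \rank (mapQ N' i).
Proof.
case=> P [P'] [R] [R'] [_ P'P RR' _ /(_ i) NR]; apply/eqP.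
rewrite eqn_leq; apply/andP; split.
  have -> : mapQ N i = P *m mapQ N' i *m R' by rewrite -NR -mulmxA RR' mulmx1.
  exact: leq_trans (mxrankM_maxl _ _) (mxrankM_maxr _ _).
have -> : mapQ N' i = P' *m (mapQ N i *m R) by rewrite NR mulmxA P'P mul1mx.
exact: leq_trans (mxrankM_maxr _ _) (mxrankM_maxl _ _).
Qed.

Lemma kQiso_refl (k : fieldType) n (N : kQmod k n) : kQiso N N.
Proof.
by exists 1%:M, 1%:M, 1%:M, 1%:M; split=> [||||i]; rewrite ?mulmx1 ?mul1mx.
Qed.

Section UniversalCover.
Variable n : nat.
Implicit Types (v w : seq 'I_n) (i : 'I_n).

Lemma reduced_rcons_rcons (s : seq 'I_n) a c :
  reduced (rcons (rcons s a) c) = reduced (rcons s a) && (a != c).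
Proof.
by case: s => [|z s]; rewrite /reduced /= ?andbT // rcons_path last_rcons.
Qed.

Lemma tarrow_parity i v w : tarrow i v w -> tsource v && tsink w.
Proof.
rewrite /tarrow /tsource /tsink.
by case/and3P=> _ _ /orP[]/andP[p /eqP->]; rewrite size_rcons /= ?p ?negbK.
Qed.

Lemma tarrowP i v w : tarrow i v w ->
  [/\ reduced v, reduced w & (w = rcons v i) \/ (v = rcons w i)].
Proof.
by case/and3P=> rv rw /orP[]/andP[_ /eqP e]; split; auto.
Qed.

Lemma not_reduced_rcons_rcons (s : seq 'I_n) i : ~~ reduced (rcons (rcons s i) i).
Proof. by rewrite reduced_rcons_rcons eqxx andbF. Qed.

Lemma tarrow_src_uniq i v v' w : tarrow i v w -> tarrow i v' w -> v = v'.
Proof.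
case/tarrowP=> rv _ [e1 | e1]; case/tarrowP=> rv' _ [e2 | e2].
- by have [] := rcons_inj (etrans (esym e1) e2).
- by move: rv'; rewrite e2 e1 (negbTE (not_reduced_rcons_rcons _ _)).
- by move: rv; rewrite e1 e2 (negbTE (not_reduced_rcons_rcons _ _)).
- by rewrite e1 e2.
Qed.

Lemma tarrow_snk_uniq i v w w' : tarrow i v w -> tarrow i v w' -> w = w'.
Proof.
case/tarrowP=> _ rw [e1 | e1]; case/tarrowP=> _ rw' [e2 | e2].
- by rewrite e1 e2.
- by move: rw; rewrite e1 e2 (negbTE (not_reduced_rcons_rcons _ _)).
- by move: rw'; rewrite e2 e1 (negbTE (not_reduced_rcons_rcons _ _)).
- by have [] := rcons_inj (etrans (esym e1) e2).
Qed.

Definition tadj i v w := tarrow i v w || tarrow i w v.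

Lemma tadjC i v w : tadj i v w = tadj i w v.
Proof. exact: orbC. Qed.

Lemma tadjE i v w :
  tadj i v w = [&& reduced v, reduced w & (w == rcons v i) || (v == rcons w i)].
Proof.
rewrite /tadj /tarrow /tsource /tsink; case: (reduced v) (reduced w) => [] [] //=.
have [->|_] := eqVneq w (rcons v i).
  by rewrite size_rcons /=; case: (odd (size v)); rewrite ?orbT.
have [->|_] := eqVneq v (rcons w i).
  by rewrite size_rcons /=; case: (odd (size w)).
by rewrite !andbF.
Qed.

Definition ones (k : fieldType) : 'I_n -> seq 'I_n -> seq 'I_n -> k :=
  fun _ _ _ => 1.

Lemma pushdown_ones (k : fieldType) S i :
  mapQ (pushdown S (@ones k)) i = relmx k [::] (tarrow i) (srcs S) (snks S).
Proof. by []. Qed.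

Lemma tadj_src i v w : tsource v -> tadj i v w = tarrow i v w.
Proof.
move=> sv; apply/orb_idr => /tarrow_parity/andP[_].
by move: sv; rewrite /tsink /tsource => /negbTE->.
Qed.

Lemma tadj_snk i v w : tsink v -> tadj i v w = tarrow i w v.
Proof.
move=> sv; apply/orb_idl => /tarrow_parity/andP[].
by move: sv; rewrite /tsink /tsource => ->.
Qed.

Lemma size_srcs S : size (srcs S) = count (fun v => odd (size v) == false) S.
Proof. by rewrite size_filter; apply: eq_count => v; rewrite eqbF_neg. Qed.

Lemma size_snks S : size (snks S) = count (fun v => odd (size v) == true) S.
Proof. by rewrite size_filter; apply: eq_count => v; rewrite eqb_id. Qed.

Lemma pushdown_rank_parity (k : fieldType) S i (q : bool) : uniq S ->
  (\rank (mapQ (pushdown S (@ones k)) i) == count (fun v => odd (size v) == q) S)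
  = all (fun v => (odd (size v) == q) ==> has (tadj i v) S) S.
Proof.
move=> uS; rewrite pushdown_ones; case: q.
  rewrite -size_snks relmx_rank_cols ?filter_uniq //; last exact: tarrow_snk_uniq.
  rewrite /snks all_filter; apply: eq_all => v /=; rewrite /tsink eqb_id.
  case: (boolP (odd (size v))) => //= sv.
  apply/hasP/hasP => [[w] | [w wS]].
    by rewrite mem_filter => /andP[_ wS] wv; exists w; rewrite // tadj_snk.
  by rewrite tadj_snk // => wv; exists w; rewrite // mem_filter (andP (tarrow_parity wv)).1.
rewrite -size_srcs relmx_rank_rows ?filter_uniq //; last exact: tarrow_src_uniq.
rewrite /srcs all_filter; apply: eq_all => v /=; rewrite /tsource eqbF_neg.
case: (boolP (~~ odd (size v))) => //= sv.
apply/hasP/hasP => [[w] | [w wS]].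
  by rewrite mem_filter => /andP[_ wS] vw; exists w; rewrite // tadj_src.
by rewrite tadj_src // => vw; exists w; rewrite // mem_filter (andP (tarrow_parity vw)).2.
Qed.
End UniversalCover.

Local Close Scope ring_scope.

Lemma count_parity_iota s d (q : bool) :
  count (fun a => odd a == q) (iota s (2 * d)) = d.
Proof.
elim: d s => // d IH s; rewrite mulnS iotaD count_cat IH /=.
by case: (odd s); case: (q).
Qed.

Lemma odd_split a c : c <= a -> odd a = odd c -> a = c + 2 * (a - c)./2.
Proof.
move=> ca pa; have := odd_double_half (a - c).
by rewrite oddB // pa addbb add0n -muln2; lia.
Qed.

Lemma ltn_div_last_mod t r m :
  0 < m -> t < r -> t %% m = m.-1 -> t %/ m < r %/ m.
Proof.
move=> m_gt0 tr tm; rewrite -[(_ < _)]/((t %/ m).+1 <= r %/ m) leq_divRL // mulSn.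
by have := divn_eq t m; move: (t %/ m * m) tm => q; lia.
Qed.

Section Zigzag.
Variable N : nat.
Hypothesis N_gt0 : 0 < N.
Variable sg : 'I_N.+1 -> 'I_N.+1.
Hypothesis sg_inj : injective sg.

Definition lab (l : nat) := sg (inord l).
Definition letter (a : nat) := lab (odd a).
Definition zigzag (a : nat) := map letter (iota 0 a).
Arguments zigzag : simpl never.

Lemma lab_inj l l' : l <= N -> l' <= N -> lab l = lab l' -> l = l'.
Proof. by move=> lN l'N /sg_inj/(congr1 val); rewrite /= !inordK. Qed.

Lemma size_zigzag a : size (zigzag a) = a.
Proof. by rewrite size_map size_iota. Qed.

Lemma zigzagS a : zigzag a.+1 = rcons (zigzag a) (letter a).
Proof. by rewrite /zigzag -[a.+1]addn1 iotaD map_cat cats1. Qed.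

Lemma zigzag_inj : injective zigzag.
Proof. by move=> a a' /(congr1 size); rewrite !size_zigzag. Qed.

Lemma letterS_neq a : letter a != letter a.+1.
Proof.
have b1N (c : bool) : c <= N by case: c.
by apply/eqP => /(lab_inj (b1N _) (b1N _)) /=; case: (odd a).
Qed.

Lemma letter_neq_lab a l : 2 <= l <= N -> letter a != lab l.
Proof.
case/andP=> l2 lN; apply/eqP => /(lab_inj (leq_trans (leq_b1 _) N_gt0) lN).
lia.
Qed.

Lemma reduced_zigzag a : reduced (zigzag a).
Proof.
elim: a => [|[|a] IH] //.
by rewrite zigzagS [zigzag a.+1]zigzagS reduced_rcons_rcons -zigzagS IH letterS_neq.
Qed.

Lemma reduced_branch a l : 2 <= l <= N -> reduced (rcons (zigzag a) (lab l)).
Proof.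
case: a => [|a] l2N //; rewrite zigzagS reduced_rcons_rcons -zigzagS reduced_zigzag.
exact: letter_neq_lab.
Qed.

Lemma rcons_zigzag_eq a a' i :
  rcons (zigzag a) i = zigzag a' -> a' = a.+1 /\ i = letter a.
Proof.
move=> e; have a'E : a' = a.+1 by move/(congr1 size): e; rewrite size_rcons !size_zigzag.
by move: e; rewrite a'E zigzagS => /rcons_inj[].
Qed.

Lemma rcons_zigzag_inj a a' i i' :
  rcons (zigzag a) i = rcons (zigzag a') i' -> a = a' /\ i = i'.
Proof. by move/eqP; rewrite eqseq_rcons => /andP[/eqP/zigzag_inj -> /eqP ->]. Qed.

Lemma tadj_zigzagS a : tadj (letter a) (zigzag a) (zigzag a.+1).
Proof. by rewrite tadjE !reduced_zigzag zigzagS eqxx. Qed.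

Lemma tadj_branch a l : 2 <= l <= N ->
  tadj (lab l) (zigzag a) (rcons (zigzag a) (lab l)).
Proof. by move=> l2N; rewrite tadjE reduced_zigzag reduced_branch ?eqxx. Qed.

Section Caterpillar.
Variables (b m r : nat) (tail : bool).
Hypothesis m_gt0 : 0 < m.
Hypothesis r_le : r <= (N - 1) * m.

(* The m spine vertices [zigzag (b.+1 + 2 t0)], t0 < m, carry the leaves,
   leaf t hanging at t0 = t mod m. *)
Definition leaf_base t := b.+1 + 2 * (t %% m).
Definition leaf_label t := 2 + t %/ m.
Definition leaf t := rcons (zigzag (leaf_base t)) (lab (leaf_label t)).
Definition spine := map zigzag (iota b (2 * m + tail)).
Definition caterpillar := spine ++ map leaf (iota 0 r).

(* The labels [lab l] along which every spine vertex of parity b.+1 has a neighbour. *)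
Definition full_label l := if l < 2 then tail || (l == odd b) else l < 2 + r %/ m.

Lemma leaf_label_range t : t < r -> 2 <= leaf_label t <= N.
Proof.
move=> tr; have : t %/ m < N - 1 by rewrite ltn_divLR // (leq_trans tr).
by rewrite /leaf_label; move: (t %/ m) => q; lia.
Qed.

Lemma leaf_inj t t' : t < r -> t' < r -> leaf t = leaf t' -> t = t'.
Proof.
move=> /leaf_label_range/andP[_ tN] /leaf_label_range/andP[_ t'N].
case/rcons_zigzag_inj => base /(lab_inj tN t'N) label.
rewrite (divn_eq t m) (divn_eq t' m); move: base label; rewrite /leaf_base /leaf_label; lia.
Qed.

Lemma leaf_neq_zigzag t a : t < r -> leaf t != zigzag a.
Proof.
move=> /leaf_label_range lr; apply/eqP => /rcons_zigzag_eq[_].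
by apply/eqP; rewrite eq_sym letter_neq_lab.
Qed.

Lemma mem_zigzag_caterpillar a :
  (zigzag a \in caterpillar) = (b <= a < b + (2 * m + tail)).
Proof.
rewrite mem_cat (mem_map zigzag_inj) mem_iota; case: (_ && _) => //=.
apply/negbTE/mapP => -[t]; rewrite mem_iota => /= tr e.
by move: (leaf_neq_zigzag a tr); rewrite e eqxx.
Qed.

Lemma mem_leaf_caterpillar t : t < r -> leaf t \in caterpillar.
Proof. by move=> tr; rewrite mem_cat map_f ?orbT // mem_iota. Qed.

Lemma caterpillar_ok : thin_ok caterpillar.
Proof.
apply/andP; split.
  rewrite cat_uniq (map_inj_uniq zigzag_inj) iota_uniq /=.
  rewrite map_inj_in_uniq ?iota_uniq ?andbT => [|t t']; last first.
    by rewrite !mem_iota; apply: leaf_inj.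
  apply/hasPn => v /mapP[t]; rewrite mem_iota => /= tr ->.
  by apply/negP => /mapP[a _] /eqP; rewrite (negbTE (leaf_neq_zigzag _ tr)).
rewrite all_cat; apply/andP; split; apply/allP => v /mapP[t tr ->].
  exact: reduced_zigzag.
by move: tr; rewrite mem_iota => /leaf_label_range; apply: reduced_branch.
Qed.

Lemma leaf_base_range t : b < leaf_base t < b + 2 * m.
Proof. by have := ltn_pmod t m_gt0; rewrite /leaf_base; lia. Qed.

Lemma caterpillar_indec (k : fieldType) : thin_indec caterpillar (@ones _ k).
Proof.
have rootC : zigzag b \in caterpillar by rewrite mem_zigzag_caterpillar; lia.
split=> [|f endo idem]; first by apply/eqP => C0; rewrite C0 in rootC.
have f_adj i v w : v \in caterpillar -> w \in caterpillar -> tadj i v w -> f v = f w.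
  move=> vC wC /orP[] e.
    by have := endo _ _ _ vC wC e; rewrite /ones mulr1 mul1r.
  by have := endo _ _ _ wC vC e; rewrite /ones mulr1 mul1r.
have f_spine d : b + d < b + (2 * m + tail) -> f (zigzag (b + d)) = f (zigzag b).
  elim: d => [|d IH] bd; first by rewrite addn0.
  rewrite -IH ?addnS; last lia.
  by apply/esym/(f_adj (letter (b + d))); rewrite ?mem_zigzag_caterpillar ?tadj_zigzagS //; lia.
have f_const v : v \in caterpillar -> f v = f (zigzag b).
  rewrite mem_cat => /orP[] /mapP[t]; rewrite mem_iota => /andP[bt tK] ->.
    by rewrite -(subnKC bt) f_spine ?subnKC.
  have /andP[bt' tb] := leaf_base_range t.
  rewrite -(f_adj (lab (leaf_label t)) (zigzag (leaf_base t))) ?mem_leaf_caterpillar //.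
  - by rewrite -(subnKC (ltnW bt')) f_spine ?subnKC //; lia.
  - by rewrite mem_zigzag_caterpillar; lia.
  - exact/tadj_branch/leaf_label_range.
have /eqP := idem _ rootC; rewrite -subr_eq0 -{3}(mulr1 (f _)) -mulrBr mulf_eq0 subr_eq0.
by case/orP => /eqP f0; [left | right] => v /f_const ->.
Qed.

Lemma odd_size_leaf t : odd (size (leaf t)) = odd b.
Proof. by rewrite size_rcons size_zigzag /leaf_base /= oddD oddM /= addbF negbK. Qed.

Lemma count_parity_caterpillar (q : bool) :
  count (fun v => odd (size v) == q) caterpillar = m + (q == odd b) * (tail + r).
Proof.
rewrite count_cat !count_map /spine iotaD count_cat.
rewrite (eq_count (a2 := fun a => odd a == q)) => [|a]; last by rewrite /= size_zigzag.
rewrite count_parity_iota mulnDr addnA; congr (_ + _ + _).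
  case: tail; rewrite /= ?muln0 // (size_zigzag (b + 2 * m)) oddD oddM /= addbF eq_sym.
  by case: (_ == _).
rewrite (eq_count (a2 := fun _ => q == odd b)) => [|t]; last first.
  by rewrite -[LHS]/(odd (size (leaf t)) == q) odd_size_leaf eq_sym.
by case: (q == odd b); rewrite ?count_predT ?count_pred0 ?size_iota ?mul1n.
Qed.

Lemma caterpillar_attach v : v \in caterpillar -> odd (size v) = odd b.+1 ->
  exists2 t0, t0 < m & v = zigzag (b.+1 + 2 * t0).
Proof.
rewrite mem_cat => /orP[] /mapP[a]; rewrite mem_iota => /andP[ba aK] ->; last first.
  by rewrite odd_size_leaf /=; case: (odd b).
rewrite size_zigzag => pa; have ba' : b < a.
  by rewrite ltn_neqAle ba andbT; apply/eqP => ab; move: pa; rewrite ab /=; case: (odd a).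
exists (a - b.+1)./2; last by rewrite -odd_split.
by have := odd_split ba' pa; move: aK; case: (tail); lia.
Qed.

Lemma has_tadj_attach l t0 : l <= N -> t0 < m -> full_label l ->
  has (tadj (lab l) (zigzag (b.+1 + 2 * t0))) caterpillar.
Proof.
move=> lN t0m; rewrite /full_label; case: ltnP => [l2 | l2 lr].
  have [lb _ | nlb] := eqVneq l (odd b).
    apply/hasP; exists (zigzag (b + 2 * t0)); first by rewrite mem_zigzag_caterpillar; lia.
    have -> : lab l = letter (b + 2 * t0) by rewrite /letter oddD oddM /= addbF lb.
    by rewrite tadjC addSn tadj_zigzagS.
  rewrite orbF => tl.
  apply/hasP; exists (zigzag (b.+2 + 2 * t0)); first by rewrite mem_zigzag_caterpillar tl; lia.
  have -> : lab l = letter (b.+1 + 2 * t0).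
    by rewrite /letter oddD oddM /= addbF; case: (odd b) l lN l2 nlb => [] [|[|]].
  by rewrite [b.+2 + _]addSn tadj_zigzagS.
pose t := (l - 2) * m + t0.
have tr : t < r.
  have : (l - 2).+1 <= r %/ m by lia.
  by rewrite leq_divRL // mulSn /t; lia.
have baseE : leaf_base t = b.+1 + 2 * t0 by rewrite /leaf_base modnMDl modn_small.
have labelE : leaf_label t = l by rewrite /leaf_label divnMDl // divn_small // addn0; lia.
apply/hasP; exists (leaf t); first exact: mem_leaf_caterpillar.
by rewrite /leaf baseE labelE tadj_branch ?l2.
Qed.

Lemma no_tadj_last_attach l : l <= N -> ~~ full_label l ->
  ~~ has (tadj (lab l) (zigzag (b.+1 + 2 * m.-1))) caterpillar.
Proof.
set c := b.+1 + 2 * m.-1 => lN; rewrite /full_label => ncond.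
have odd_c : odd c = ~~ odd b by rewrite oddD oddM /= addbF.
apply/hasPn => w wC; apply/negP; rewrite tadjE => /and3P[_ _ /orP[/eqP wE | /eqP cE]].
  move: wC; rewrite wE mem_cat => /orP[] /mapP[a]; rewrite mem_iota => /andP[ba aK].
    move/rcons_zigzag_eq => [aE /(lab_inj lN (leq_trans (leq_b1 _) N_gt0)) lE].
    move: ncond aK; rewrite lE odd_c aE /c; case: (odd b); case: (tail) => /=; lia.
  move/rcons_zigzag_inj => [cE /(lab_inj lN (andP (leaf_label_range aK)).2) lE].
  have am : a %% m = m.-1 by move: cE; rewrite /c /leaf_base; lia.
  have := ltn_div_last_mod m_gt0 aK am.
  move: ncond; rewrite lE /leaf_label ltnNge leq_addr /=.
  by move: (a %/ m) (r %/ m) => p q; lia.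
have c_gt0 : 0 < c by [].
move: cE; rewrite -(prednK c_gt0) zigzagS => /rcons_inj[_].
move/esym/(lab_inj lN (leq_trans (leq_b1 _) N_gt0)) => lE.
move: ncond; rewrite lE /c /= oddD oddM /= addbF.
by rewrite ltnS leq_b1 eqxx orbT.
Qed.

Lemma caterpillar_full_label l : l <= N ->
  all (fun v => (odd (size v) == odd b.+1) ==> has (tadj (lab l) v) caterpillar) caterpillar
  = full_label l.
Proof.
move=> lN; apply/allP/idP => [full | cond v vC]; last first.
  apply/implyP => /eqP pv; have [t0 t0m ->] := caterpillar_attach vC pv.
  exact: has_tadj_attach.
apply/negPn/negP => /(no_tadj_last_attach lN)/negP; apply.
have lastC : zigzag (b.+1 + 2 * m.-1) \in caterpillar by rewrite mem_zigzag_caterpillar; lia.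
by move/implyP: (full _ lastC); apply; rewrite size_zigzag oddD oddM /= addbF.
Qed.

End Caterpillar.
End Zigzag.

Lemma val_add_ord_max N (d : 'I_N.+1) : (d != 0)%R -> val (d + ord_max)%R = (val d).-1.
Proof.
case: d => -[|d] ld //= _.
by rewrite addSnnS modnDr modn_small //; lia.
Qed.

Lemma shift_interval_inj N a (j j' : 'I_N.+1) : 0 < a <= N ->
  (forall i : 'I_N.+1, (val (i - j)%R < a) = (val (i - j')%R < a)) -> j = j'.
Proof.
(* j lies in its own interval and j - 1 does not. *)
case/andP=> a_gt0 aN same; apply/eqP; rewrite -subr_eq0; apply/negPn/negP => jj'.
have /esym := same j; rewrite subrr a_gt0 => jj'_lt.
have := same (j + ord_max)%R; rewrite addrAC subrr add0r [(j + _ - j')%R]addrAC.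
by rewrite val_add_ord_max //; move: jj'_lt; move: (val _) => d /=; lia.
Qed.

Section KroneckerFamily.
Variables (k : fieldType) (N x y : nat).

(* The m = min x y leaf-carrying vertices are sources iff x < y. *)
Definition kron_tree (j : 'I_N.+1) :=
  caterpillar (fun i => (i + j)%R) (x < y) (minn x y) (maxn x y - minn x y - 1) (x != y).

Definition kron_module j := pushdown (kron_tree j) (@ones _ k).

Definition full_count :=
  if x != y then 2 + (maxn x y - minn x y - 1) %/ minn x y else 1.

Lemma kron_module_dims j : d1 (kron_module j) = x /\ d2 (kron_module j) = y.
Proof.
rewrite /= size_srcs size_snks !count_parity_caterpillar.
by case: ltngtP => /=; lia.
Qed.

Hypotheses (x_gt0 : 0 < x) (y_gt0 : 0 < y) (x_lt : x < N * y) (y_le : y <= N * x).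

Let N_gt0 : 0 < N.
Proof. by move: x_lt; case: N => //; rewrite mul0n. Qed.

Let m_gt0 : 0 < minn x y.
Proof. by rewrite leq_min x_gt0. Qed.

Let r_lt : maxn x y - minn x y - 1 < (N - 1) * minn x y.
Proof. by rewrite mulnBl mul1n; case: (leqP x y); nia. Qed.

Let shift_inj (j : 'I_N.+1) : injective (fun i : 'I_N.+1 => (i + j)%R).
Proof. exact: addIr. Qed.

Lemma kron_module_cover_thin j : cover_thin (kron_module j).
Proof.
exists (kron_tree j), (@ones _ k); split; last exact: kQiso_refl.
  exact: (caterpillar_ok N_gt0 (@shift_inj j) (x < y) (x != y) m_gt0 (ltnW r_lt)).
exact: (caterpillar_indec N_gt0 (@shift_inj j) (x < y) (x != y) m_gt0 (ltnW r_lt) k).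
Qed.

Lemma kron_module_full_rank j i :
  (\rank (mapQ (kron_module j) i) == minn x y) = (val (i - j)%R < full_count).
Proof.
have iE : i = lab (fun i => (i + j)%R) (val (i - j)%R) by rewrite /lab inord_val subrK.
have [uniq_tree _] :=
  andP (caterpillar_ok N_gt0 (@shift_inj j) (x < y) (x != y) m_gt0 (ltnW r_lt)).
have count_attach :
    count (fun v => odd (size v) == odd (x < y).+1) (kron_tree j) = minn x y.
  by rewrite count_parity_caterpillar; case: (x < y); rewrite /= mul0n addn0.
rewrite {1}iE -{1}count_attach pushdown_rank_parity //.
rewrite (caterpillar_full_label N_gt0 (@shift_inj j) _ _ m_gt0 (ltnW r_lt)) ?leq_ord //.
rewrite /full_label /full_count; move: (val (i - j)%R) => l.
case: eqVneq => [<- | _] /=; last by case: ltnP => // l2; rewrite (leq_trans l2).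
by rewrite ltnn maxnn minnn subnn div0n; case: l => [|[|]].
Qed.

Lemma full_count_range : 0 < full_count <= N.
Proof.
rewrite /full_count; case: eqVneq => [xy | _]; first by rewrite N_gt0.
have : (maxn x y - minn x y - 1) %/ minn x y < N - 1 by rewrite ltn_divLR // mulnC.
by move: (_ %/ _) => q /=; lia.
Qed.

End KroneckerFamily.

Theorem corollary1p2 (k : fieldType) (n : nat) (x y : nat) :
  (2 <= n)%N -> (0 < x)%N -> (0 < y)%N ->
  (x < (n - 1) * y)%N -> (y <= (n - 1) * x)%N ->
  exists N : 'I_n -> kQmod k n,
    (forall j, [/\ d1 (N j) = x, d2 (N j) = y & cover_thin (N j)]) /\
    (forall j j', j != j' -> ~ kQiso (N j) (N j')).
Proof.
case: n => [|N] // _; rewrite subn1 /= => x_gt0 y_gt0 x_lt y_le.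
exists (kron_module k x y); split=> [j | j j' jj' iso].
  have [-> ->] := kron_module_dims k x y j.
  by split=> //; exact: kron_module_cover_thin.
case/eqP: jj'; apply: (shift_interval_inj (full_count_range x_gt0 y_gt0 x_lt y_le)) => i.
by rewrite -!(kron_module_full_rank k x_gt0 y_gt0 x_lt y_le) (kQiso_rank i iso).
Qed.
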